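(* If $C$ is an identifying code of $K_n\times K_m$ with $cs(C)=n-1$ and $rs(C)=m-1$, then no vertex of $C$ is isolated in $C$.
   Context: $K_n\times K_m$ is the direct product of complete graphs: vertex set $[n]\times[m]$, with $(i,r)$ adjacent to $(j,s)$ iff $i\ne j$ and $r \ne s$. An identifying code is a dominating set $C$ with $N[x]\cap C\ne N[y]\cap C$ for all distinct vertices $x,y$ ($N[x]$ the closed neighborhood). Columns: $C_i=\{(i,t):t\in[m]\}$; rows: $R_r=\{(k,r):k\in[n]\}$. $cs(C)$ (resp. $rs(C)$) is the number of columns (resp. rows) meeting $C$. A vertex $v=(i,r)$ is isolated in $C$ if $C\cap C_i=\{v\}$ and $C\cap R_r=\{v\}$. *)

From mathcomp Require Import all_boot.
Set Implicit Arguments. Unset Strict Implicit. Unset Printing Implicit Defensive.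

Definition vtx (n m : nat) := ('I_n * 'I_m)%type.

Definition adjKK n m (x y : vtx n m) : bool := (x.1 != y.1) && (x.2 != y.2).

Definition cnbhd n m (x : vtx n m) : {set vtx n m} :=
  [set y | (y == x) || adjKK x y].

Definition dominating n m (C : {set vtx n m}) : Prop :=
  forall x : vtx n m, cnbhd x :&: C != set0.

Definition identifying_code n m (C : {set vtx n m}) : Prop :=
  dominating C /\
  forall x y : vtx n m, x != y -> cnbhd x :&: C != cnbhd y :&: C.

Definition column n m (i : 'I_n) : {set vtx n m} := [set v | v.1 == i].
Definition row n m (r : 'I_m) : {set vtx n m} := [set v | v.2 == r].

Definition cs n m (C : {set vtx n m}) : nat :=
  #|[set i : 'I_n | column m i :&: C != set0]|.
Definition rs n m (C : {set vtx n m}) : nat :=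
  #|[set r : 'I_m | row n r :&: C != set0]|.

Definition isolated n m (C : {set vtx n m}) (v : vtx n m) : Prop :=
  column m v.1 :&: C = [set v] /\ row n v.2 :&: C = [set v].

From mathcomp Require Import all_boot.
Set Implicit Arguments. Unset Strict Implicit.

(* Let v = (i, r) be an isolated vertex of C.  Since C
   meets only n - 1 of the n columns, some column j misses C; likewise some
   row s misses C; and j <> i because column i contains v.  Consider the
   distinct vertices (j, r) and (i, s).  No vertex of C lies in column j or
   row s, so a vertex c of C sees (j, r) iff c.2 <> r, and sees (i, s) iff
   c.1 <> i.  As v is isolated, within C being in row r, being in column i,
   and being v are the same condition, so (j, r) and (i, s) have the same
   trace on C, contradicting that C is identifying. *)

Lemma exists_notin (T : finType) (A : {set T}) :
  #|A| < #|T| -> exists x, x \notin A.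
Proof.
move=> ltAT; have : 0 < #|~: A| by rewrite -(ltn_add2l #|A|) addn0 cardsC.
by case/card_gt0P => x; rewrite inE; exists x.
Qed.

Section EmptyLines.
Variables (n m : nat) (C : {set vtx n m}).

Lemma empty_column (i0 : 'I_n) :
  cs C = n - 1 -> exists j : 'I_n, forall c, c \in C -> c.1 != j.
Proof.
move=> csC; have [|j] := @exists_notin _ [set i | column m i :&: C != set0].
  by rewrite -/(cs C) csC card_ord; case: n i0 => [[]|k] //= _; rewrite subn1.
rewrite inE negbK => /eqP colj; exists j => c cC; apply/eqP => c_j.
have : c \in column m j :&: C by rewrite !inE c_j eqxx.
by rewrite colj inE.
Qed.

Lemma empty_row (r0 : 'I_m) :
  rs C = m - 1 -> exists s : 'I_m, forall c, c \in C -> c.2 != s.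
Proof.
move=> rsC; have [|s] := @exists_notin _ [set r | row n r :&: C != set0].
  by rewrite -/(rs C) rsC card_ord; case: m r0 => [[]|k] //= _; rewrite subn1.
rewrite inE negbK => /eqP rows; exists s => c cC; apply/eqP => c_s.
have : c \in row n s :&: C by rewrite !inE c_s eqxx.
by rewrite rows inE.
Qed.

Lemma isolated_column (v c : vtx n m) :
  isolated C v -> c \in C -> (c.1 == v.1) = (c == v).
Proof.
by rewrite /isolated => -[/setP/(_ c) + _] cC; rewrite !inE cC andbT.
Qed.

Lemma isolated_row (v c : vtx n m) :
  isolated C v -> c \in C -> (c.2 == v.2) = (c == v).
Proof.
by rewrite /isolated => -[_ /setP/(_ c) +] cC; rewrite !inE cC andbT.
Qed.

Lemma trace_empty_column (j : 'I_n) (r : 'I_m) :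
  (forall c, c \in C -> c.1 != j) ->
  cnbhd (j, r) :&: C = [set c in C | c.2 != r].
Proof.
move=> colj; apply/setP => c; rewrite !inE /adjKK /=.
case cC: (c \in C); rewrite ?andbF //= andbT.
have c_j := colj c cC; rewrite [j == _]eq_sym [r == _]eq_sym (negbTE c_j) /=.
by case: (c =P (j, r)) c_j => [->|]; rewrite ?eqxx.
Qed.

Lemma trace_empty_row (i : 'I_n) (s : 'I_m) :
  (forall c, c \in C -> c.2 != s) ->
  cnbhd (i, s) :&: C = [set c in C | c.1 != i].
Proof.
move=> rows; apply/setP => c; rewrite !inE /adjKK /=.
case cC: (c \in C); rewrite ?andbF //= andbT.
have c_s := rows c cC; rewrite [i == _]eq_sym [s == _]eq_sym (negbTE c_s) andbT.
by case: (c =P (i, s)) c_s => [->|]; rewrite ?eqxx.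
Qed.

End EmptyLines.

Theorem mainTheorem11 (n m : nat) (C : {set vtx n m}) :
  identifying_code C -> cs C = n - 1 -> rs C = m - 1 ->
  forall v : vtx n m, v \in C -> ~ isolated C v.
Proof.
move=> [_ separating] csC rsC [i r] vC isov.
have [j colj] := empty_column i csC.
have [s rows] := empty_row r rsC.
have neq_jr_is : (j, r) != (i, s).
  by apply: contraNneq (colj _ vC) => -[-> _].
suff same_trace : cnbhd (j, r) :&: C = cnbhd (i, s) :&: C.
  by move/eqP: same_trace; apply/negP/separating.
rewrite (trace_empty_column r colj) (trace_empty_row i rows).
apply/setP => c; rewrite !inE; case cC: (c \in C) => //=.
by rewrite (isolated_row isov cC) (isolated_column isov cC).
Qed.
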